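(* Let $Y$ be a CFG-space over a Boolean algebra $B$ and let $y_0,\dots,y_n\in Y$ be such that every element of $Y$ is a convex combination of $y_0,\dots,y_n$ and $d(y_i,y_j)=1$ for all $i\ne j$. Let $f:Y\to B$ be a contractive map (where $B$ carries the metric $d(a,b)=a\triangle b$) such that $f(y_i)\vee f(y_j)=1$ for all $i\ne j$. Then the equation $f(x)=0$ has at most one solution $x\in Y$.
   Context: A Boolean metric space over $B$ is a set with symmetric $d$ into $B$, $d(x,y)=0$ iff $x=y$, $d(x,z)\le d(x,y)\vee d(y,z)$. A map $f$ is contractive if $d(f(x),f(y))\le d(x,y)$. A partition of $B$ is a finite family of pairwise disjoint elements with supremum $1$; $x$ is a convex combination of $x_0,\dots,x_n$ with coefficients a partition $a_0,\dots,a_n$ if $a_i\wedge d(x,x_i)=0$ for all $i$. A CFG-space is a Boolean metric space that is convex (every such convex combination of its points exists in it) and finitely generated (some finite subset $S$ has every point as a convex combination of points of $S$). $\triangle$ is symmetric difference. *)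

(* A Boolean algebra is a [ctbDistrLatticeType]
   (complemented distributive lattice with top and bottom). *)
From HB Require Import structures.
From mathcomp Require Import all_boot all_order.
Set Implicit Arguments. Unset Strict Implicit. Unset Printing Implicit Defensive.
Import Order.TTheory.
Local Open Scope order_scope.

Section Defs.
Context {disp : Order.disp_t} {B : ctbDistrLatticeType disp}.

Definition symdiff (a b : B) : B := (a `\` b) `|` (b `\` a).

Definition boolean_metric {X : Type} (d : X -> X -> B) : Prop :=
  [/\ (forall x y, d x y = d y x),
      (forall x y, d x y = \bot <-> x = y) &
      (forall x y z, d x z <= d x y `|` d y z)].

Definition is_partition (a : seq B) : Prop :=
  (forall i j, (i < size a)%N -> (j < size a)%N -> i <> j ->
     nth \bot a i `&` nth \bot a j = \bot) /\
  \join_(c <- a) c = \top.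

Definition convex_comb {X : Type} (d : X -> X -> B) (x : X)
    (xs : seq X) (a : seq B) : Prop :=
  size xs = size a /\ is_partition a /\
  forall i, (i < size a)%N -> forall x0 : X,
    nth \bot a i `&` d x (nth x0 xs i) = \bot.

Definition convex_space {X : Type} (d : X -> X -> B) : Prop :=
  forall (xs : seq X) (a : seq B), size xs = size a -> is_partition a ->
    exists x, convex_comb d x xs a.

Definition fin_generated {X : Type} (d : X -> X -> B) : Prop :=
  exists S : seq X, forall x, exists a, convex_comb d x S a.

Definition CFG_space {X : Type} (d : X -> X -> B) : Prop :=
  [/\ boolean_metric d, convex_space d & fin_generated d].

Definition contractive_to_B {X : Type} (d : X -> X -> B) (f : X -> B) : Prop :=
  forall x y, symdiff (f x) (f y) <= d x y.

End Defs.

From HB Require Import structures.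
From mathcomp Require Import all_boot all_order.
Import Order.TTheory Order.CBDistrLatticeTheory.
Local Open Scope order_scope.

(* Write x and x' as convex
   combinations of y_0,...,y_n with coefficient partitions a and a'.  Since
   both partitions join to 1, d(x,x') = \/_{i,j} d(x,x') /\ a_i /\ a'_j, so it
   suffices to show that every cell a_i /\ a'_j meets d(x,x') trivially.
   - Diagonal cells (i = j): a_i is disjoint from d(x,y_i) and a'_i from
     d(x',y_i); by the ultrametric triangle inequality a_i /\ a'_i is then
     disjoint from d(x,x').
   - Off-diagonal cells (i <> j): contractivity and f(x) = 0 give
     f(y_k) <= d(x,y_k), so a_i /\ f(y_i) = 0 and a'_j /\ f(y_j) = 0; as
     f(y_i) \/ f(y_j) = 1, the cell a_i /\ a'_j itself is 0.
   Hence d(x,x') = 0, i.e. x = x'. *)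

Section BooleanAlgebraFacts.
Context {disp : Order.disp_t} {B : ctbDistrLatticeType disp}.
Implicit Types (b c p q u v : B) (s : seq B).

Lemma le_disjoint {c c' b} : c <= c' -> c' `&` b = \bot -> c `&` b = \bot.
Proof. by move=> le_cc' cb0; apply/eqP; rewrite -lex0 -cb0 leI2. Qed.

Lemma disjoint_join_seq b s :
  (forall i, (i < size s)%N -> b `&` nth \bot s i = \bot) ->
  b `&` \join_(c <- s) c = \bot.
Proof.
move=> bs0; rewrite (big_nth \bot) big_mkord.
by apply: joins_disjoint => i _; exact: bs0.
Qed.

Lemma bot_of_cells {a a' : seq B} {b} :
  \join_(c <- a) c = \top -> \join_(c <- a') c = \top ->
  (forall i j, (i < size a)%N -> (j < size a')%N ->
     b `&` nth \bot a i `&` nth \bot a' j = \bot) ->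
  b = \bot.
Proof.
move=> ja ja' cells0; rewrite -[b]meetx1 -ja.
apply: disjoint_join_seq => i lt_i; rewrite -[_ `&` _]meetx1 -ja'.
by apply: disjoint_join_seq => j lt_j; exact: cells0.
Qed.

Lemma disjoint_of_cover {p q u v} :
  p `&` u = \bot -> q `&` v = \bot -> u `|` v = \top -> p `&` q = \bot.
Proof.
move=> pu0 qv0 uv1; rewrite -[p `&` q]meetx1 -uv1 meetUr.
have -> : p `&` q `&` u = \bot by rewrite -meetA [q `&` u]meetC meetA pu0 meet0x.
by rewrite -meetA qv0 meetx0 joinx0.
Qed.

End BooleanAlgebraFacts.

Section MetricFacts.
Context {disp : Order.disp_t} {B : ctbDistrLatticeType disp}.
Context {X : Type} {d : X -> X -> B}.
Hypothesis d_metric : boolean_metric d.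

Lemma disjoint_dist_via {c x x'} y :
  c `&` d x y = \bot -> c `&` d x' y = \bot -> c `&` d x x' = \bot.
Proof.
case: d_metric => d_sym _ d_tri cxy0 cx'y0.
apply/eqP; rewrite -lex0; apply: (@le_trans _ _ (c `&` (d x y `|` d y x'))).
  by apply: leI2.
by rewrite meetUr cxy0 d_sym cx'y0 joinx0.
Qed.

Lemma contractive_zero_le {f : X -> B} {z} y :
  contractive_to_B d f -> f z = \bot -> f y <= d z y.
Proof.
by move=> f_contr fz0; have := f_contr z y; rewrite fz0 /symdiff diff0x diffx0 join0x.
Qed.

Lemma coef_disjoint_zero {f : X -> B} {z ys a i} y0 :
  contractive_to_B d f -> f z = \bot -> convex_comb d z ys a ->
  (i < size a)%N -> nth \bot a i `&` f (nth y0 ys i) = \bot.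
Proof.
move=> f_contr fz0 [_ [_ a_comb]] lt_i.
rewrite meetC; apply: (le_disjoint (contractive_zero_le (nth y0 ys i) f_contr fz0)).
by rewrite meetC; exact: a_comb.
Qed.

End MetricFacts.

Theorem lemma3p3 (disp : Order.disp_t) (B : ctbDistrLatticeType disp)
  (Y : Type) (d : Y -> Y -> B) (ys : seq Y) (f : Y -> B) :
  CFG_space d ->
  (0 < size ys)%N ->
  (forall x, exists a, convex_comb d x ys a) ->
  (forall y0 : Y, forall i j, (i < size ys)%N -> (j < size ys)%N -> i <> j ->
     d (nth y0 ys i) (nth y0 ys j) = \top) ->
  contractive_to_B d f ->
  (forall y0 : Y, forall i j, (i < size ys)%N -> (j < size ys)%N -> i <> j ->
     f (nth y0 ys i) `|` f (nth y0 ys j) = \top) ->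
  forall x x' : Y, f x = \bot -> f x' = \bot -> x = x'.
Proof.
move=> [d_metric _ _] _ ys_gen _ f_contr f_cover x x' fx0 fx'0.
have [_ dist_eq0 _] := d_metric.
have [a comb_a] := ys_gen x; have [a' comb_a'] := ys_gen x'.
have [size_a [[_ join_a] a_comb]] := comb_a.
have [size_a' [[_ join_a'] a'_comb]] := comb_a'.
apply/dist_eq0; apply: (bot_of_cells join_a join_a') => i j lt_i lt_j.
case: (eqVneq i j) => [<- | /eqP neq_ij].
- (* diagonal cell: the triangle inequality through y_i *)
  rewrite -meetA meetC.
  apply: (disjoint_dist_via d_metric (nth x ys i)).
  + by apply: (le_disjoint (leIl _ _)); exact: a_comb.
  + by apply: (le_disjoint (leIr _ _)); apply: a'_comb; rewrite -size_a' size_a.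
- (* off-diagonal cell: already a_i /\ a'_j = 0 *)
  have cover_ij : f (nth x ys i) `|` f (nth x ys j) = \top.
    by apply: f_cover neq_ij; [rewrite size_a | rewrite size_a'].
  have cell0 : nth \bot a i `&` nth \bot a' j = \bot.
    exact: (disjoint_of_cover (coef_disjoint_zero x f_contr fx0 comb_a lt_i)
              (coef_disjoint_zero x f_contr fx'0 comb_a' lt_j) cover_ij).
  by rewrite -meetA cell0 meetx0.
Qed.
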